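(* Let $X_1,\dots,X_p$ be metrizable spaces and $B\hookrightarrow A\twoheadrightarrow A/B$ an exact sequence of Polish Abelian groups ($B$ closed in $A$; no continuous cross-section is assumed). Then every almost layered function $f:X_{\le p}\times I^p\to A/B$ has an almost layered lift $F:X_{\le p}\times I^p\to A$.
   Context: Let $I=(0,1]$. A continuous dissection over a metrizable $X$ is a locally finite family $\mathcal{F}$ of continuous functions $X\to[0,1]$ containing $0,1$ (every point has a neighbourhood $U$ with $\{\xi|_U:\xi\in\mathcal{F}\}$ finite); l-complete means closed under pointwise max, min, and pointwise limits of convergent directed families. An $\mathcal{F}$-wedge is $\{(x,t):\xi_1(x)<t\le\xi_2(x)\}$. With $X_{\le i}=X_1\times\cdots\times X_i$, an ascending tuple $(\mathcal{F}_1,\dots,\mathcal{F}_p)$ has $\mathcal{F}_i$ a continuous dissection over $X_{\le i}$; a multiwedge is $\{(x_1,\dots,x_p,t_1,\dots,t_p):(x_1,\dots,x_i,t_i)\in C_i\ \forall i\}$ with $C_i$ an $\mathcal{F}_i$-wedge; minimal = nonempty and inclusion-minimal. A function $\gamma:X_{\le p}\times I^p\to A$ is layered if for some ascending tuple of l-complete continuous dissections it is constant on every minimal multiwedge. For a Polish Abelian group $A$ with a translation-invariant compatible metric $d$ (the resulting notion is independent of this choice), a function is almost layered if it is a uniform limit (in the sup-metric induced by $d$) of layered functions. On $A/B$ one uses the quotient metric. *)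

From HB Require Import structures.
From mathcomp Require Import all_boot all_algebra.
From Stdlib Require Import Reals List.

Set Implicit Arguments.
Unset Strict Implicit.

Local Open Scope R_scope.

Definition is_metric {T : Type} (d : T -> T -> R) : Prop :=
  (forall x y, 0 <= d x y) /\ (forall x y, d x y = 0 <-> x = y) /\
  (forall x y, d x y = d y x) /\ (forall x y z, d x z <= d x y + d y z).

Definition cauchy_seq {T : Type} (d : T -> T -> R) (u : nat -> T) : Prop :=
  forall eps, 0 < eps -> exists N, forall m n, (N <= m)%nat -> (N <= n)%nat -> d (u m) (u n) < eps.

Definition seq_lim {T : Type} (d : T -> T -> R) (u : nat -> T) (l : T) : Prop :=
  forall eps, 0 < eps -> exists N, forall n, (N <= n)%nat -> d (u n) l < eps.

Definition complete_metric {T : Type} (d : T -> T -> R) : Prop :=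
  forall u, cauchy_seq d u -> exists l, seq_lim d u l.

Definition separable_metric {T : Type} (d : T -> T -> R) : Prop :=
  exists s : nat -> T, forall x eps, 0 < eps -> exists n, d x (s n) < eps.

(* A Polish Abelian group, given together with a translation-invariant compatible
   metric d (every Abelian Polish group admits one, and for Abelian groups any
   such metric is complete). *)
Definition polish_ab_metric (A : zmodType) (d : A -> A -> R) : Prop :=
  is_metric d /\ (forall x y z : A, d (GRing.add x z) (GRing.add y z) = d x y) /\
  complete_metric d /\ separable_metric d.

Definition closed_subgroup (A : zmodType) (d : A -> A -> R) (B : A -> Prop) : Prop :=
  B (GRing.zero : A) /\ (forall x y, B x -> B y -> B (GRing.add x (GRing.opp y))) /\
  (forall (u : nat -> A) l, (forall n, B (u n)) -> seq_lim d u l -> B l).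

Definition quotient_map (A Q : zmodType) (B : A -> Prop) (pi : A -> Q) : Prop :=
  (forall a b, pi (GRing.add a b) = GRing.add (pi a) (pi b)) /\
  (forall q, exists a, pi a = q) /\
  (forall a, pi a = GRing.zero <-> B a).

(* "quotient distance between q and q' is < eps": the quotient metric is
   d_Q(q,q') = inf { d a a' | pi a = q, pi a' = q' }, so this is exactly
   d_Q(q,q') < eps. *)
Definition qdist_lt (A Q : zmodType) (d : A -> A -> R) (pi : A -> Q) (q q' : Q) (eps : R) : Prop :=
  exists a a', pi a = q /\ pi a' = q' /\ d a a' < eps.

(* Spaces are indexed from 0: X 0, ..., X (p-1) play the role of X_1, ..., X_p.
   Pt X n is X_{<= n} = X 0 * ... * X (n-1). *)
Definition Pt (X : nat -> Type) (n : nat) : Type := forall j : nat, lt j n -> X j.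

Definition pball (X : nat -> Type) (dX : forall i, X i -> X i -> R) (n : nat)
  (x : Pt X n) (del : R) (y : Pt X n) : Prop :=
  forall j (h : lt j n), dX j (x j h) (y j h) < del.

Definition pcont (X : nat -> Type) (dX : forall i, X i -> X i -> R) (n : nat)
  (g : Pt X n -> R) : Prop :=
  forall x eps, 0 < eps -> exists del, 0 < del /\
    forall y, pball dX x del y -> Rabs (g y - g x) < eps.

Definition loc_finite (X : nat -> Type) (dX : forall i, X i -> X i -> R) (n : nat)
  (F : (Pt X n -> R) -> Prop) : Prop :=
  forall x, exists del, 0 < del /\ exists L : list (Pt X n -> R),
    forall xi, F xi -> exists eta, In eta L /\
      forall y, pball dX x del y -> xi y = eta y.

Definition cont_dissection (X : nat -> Type) (dX : forall i, X i -> X i -> R) (n : nat)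
  (F : (Pt X n -> R) -> Prop) : Prop :=
  (forall xi, F xi -> pcont dX xi /\ forall x, 0 <= xi x <= 1) /\
  F (fun _ => 0) /\ F (fun _ => 1) /\ loc_finite dX F.

Definition fle {T : Type} (g h : T -> R) : Prop := forall x, g x <= h x.

Definition up_directed {T : Type} (G : (T -> R) -> Prop) : Prop :=
  (exists g, G g) /\
  forall g1 g2, G g1 -> G g2 -> exists g3, G g3 /\ fle g1 g3 /\ fle g2 g3.

Definition down_directed {T : Type} (G : (T -> R) -> Prop) : Prop :=
  (exists g, G g) /\
  forall g1 g2, G g1 -> G g2 -> exists g3, G g3 /\ fle g3 g1 /\ fle g3 g2.

(* pointwise limit of G viewed as a net indexed by itself (ordered by fle) *)
Definition up_net_lim {T : Type} (G : (T -> R) -> Prop) (h : T -> R) : Prop :=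
  forall x eps, 0 < eps -> exists g0, G g0 /\
    forall g, G g -> fle g0 g -> Rabs (g x - h x) < eps.

Definition down_net_lim {T : Type} (G : (T -> R) -> Prop) (h : T -> R) : Prop :=
  forall x eps, 0 < eps -> exists g0, G g0 /\
    forall g, G g -> fle g g0 -> Rabs (g x - h x) < eps.

Definition l_complete {T : Type} (F : (T -> R) -> Prop) : Prop :=
  (forall g h, F g -> F h -> F (fun x => Rmax (g x) (h x))) /\
  (forall g h, F g -> F h -> F (fun x => Rmin (g x) (h x))) /\
  (forall G h, (forall g, G g -> F g) -> up_directed G -> up_net_lim G h -> F h) /\
  (forall G h, (forall g, G g -> F g) -> down_directed G -> down_net_lim G h -> F h).

Definition Iu : Type := {t : R | 0 < t <= 1}.

Definition is_wedge {T : Type} (F : (T -> R) -> Prop) (C : T -> Iu -> Prop) : Prop :=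
  exists xi1 xi2, F xi1 /\ F xi2 /\
    forall x t, C x t <-> (xi1 x < proj1_sig t /\ proj1_sig t <= xi2 x).

Definition Dom (X : nat -> Type) (p : nat) : Type :=
  (Pt X p * (forall j : nat, lt j p -> Iu))%type.

Definition restr (X : nat -> Type) (p k : nat) (hk : lt k p) (x : Pt X p) : Pt X (S k) :=
  fun j hj => x j (Nat.lt_le_trans j (S k) p hj hk).

(* An ascending tuple (F_1,...,F_p) is Fs 0, ..., Fs (p-1), with Fs k a family
   of functions on X_{<= k+1}. *)
Definition is_multiwedge (X : nat -> Type) (p : nat)
  (Fs : forall k : nat, (Pt X (S k) -> R) -> Prop) (M : Dom X p -> Prop) : Prop :=
  exists Cs : forall k : nat, Pt X (S k) -> Iu -> Prop,
    (forall k, lt k p -> is_wedge (Fs k) (Cs k)) /\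
    forall z : Dom X p,
      M z <-> (forall k (hk : lt k p), Cs k (restr hk (fst z)) (snd z k hk)).

Definition minimal_multiwedge (X : nat -> Type) (p : nat)
  (Fs : forall k : nat, (Pt X (S k) -> R) -> Prop) (M : Dom X p -> Prop) : Prop :=
  is_multiwedge Fs M /\ (exists z, M z) /\
  forall M', is_multiwedge Fs M' -> (exists z, M' z) ->
    (forall z, M' z -> M z) -> forall z, M z -> M' z.

Definition layered (X : nat -> Type) (dX : forall i, X i -> X i -> R) (p : nat)
  {V : Type} (gam : Dom X p -> V) : Prop :=
  exists Fs : forall k : nat, (Pt X (S k) -> R) -> Prop,
    (forall k, lt k p -> cont_dissection dX (Fs k) /\ l_complete (Fs k)) /\
    forall M, minimal_multiwedge Fs M ->
      forall z z', M z -> M z' -> gam z = gam z'.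

Definition almost_layered (X : nat -> Type) (dX : forall i, X i -> X i -> R) (p : nat)
  (A : zmodType) (d : A -> A -> R) (F : Dom X p -> A) : Prop :=
  forall eps, 0 < eps -> exists g : Dom X p -> A,
    layered dX g /\ forall z, d (F z) (g z) < eps.

Definition almost_layered_q (X : nat -> Type) (dX : forall i, X i -> X i -> R) (p : nat)
  (A Q : zmodType) (d : A -> A -> R) (pi : A -> Q) (f : Dom X p -> Q) : Prop :=
  forall eps, 0 < eps -> exists g : Dom X p -> Q,
    layered dX g /\ forall z, qdist_lt d pi (f z) (g z) eps.

From mathcomp Require Import all_boot all_algebra.
From Stdlib Require Import Reals Lra List ClassicalEpsilon Classical ProofIrrelevance.

(* Choose layered g_n with quotient distance d(f, g_n) < 2^-n.
   Lift g_0 arbitrarily, and lift g_(n+1) to a point within 2 * 2^-n of the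
   current lift of g_n (possible since d(g_n, g_(n+1)) < 2 * 2^-n and the
   metric is translation invariant).  The n-th lift is a function of the
   (n-1)-st lift and of g_n, and layered functions are closed under such
   pointwise combinations, so every lift is layered.  The lifts form a
   uniformly Cauchy sequence in the complete group A; its limit F is a uniform
   limit of layered functions, and pi F = f because cosets of B are closed. *)

Local Open Scope R_scope.
Lemma dependent_choice {I : Type} {B : I -> Type} (P : forall i, B i -> Prop) :
  (forall i, exists b, P i b) -> exists f : forall i, B i, forall i, P i (f i).
Proof.
  intro H. exists (fun i => proj1_sig (constructive_indefinite_description _ (H i))).
  intro i. exact (proj2_sig (constructive_indefinite_description _ (H i))).
Qed.

Lemma Rmax_close (a b c e eps : R) :
  Rabs (a - c) < eps -> Rabs (b - e) < eps -> Rabs (Rmax a b - Rmax c e) < eps.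
Proof.
  intros H1 H2. apply Rabs_def2 in H1. apply Rabs_def2 in H2.
  apply Rabs_def1; unfold Rmax; destruct (Rle_dec a b); destruct (Rle_dec c e); lra.
Qed.

Lemma Rmin_close (a b c e eps : R) :
  Rabs (a - c) < eps -> Rabs (b - e) < eps -> Rabs (Rmin a b - Rmin c e) < eps.
Proof.
  intros H1 H2. apply Rabs_def2 in H1. apply Rabs_def2 in H2.
  apply Rabs_def1; unfold Rmin; destruct (Rle_dec a b); destruct (Rle_dec c e); lra.
Qed.

Lemma eq_of_close (a b : R) : (forall eps, 0 < eps -> Rabs (a - b) < eps) -> a = b.
Proof.
  intro H. destruct (Req_dec a b) as [E|N]; auto.
  have Hp : 0 < Rabs (a - b) by apply Rabs_pos_lt; lra.
  specialize (H _ Hp). lra.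
Qed.

Lemma le_of_close (a b : R) : (forall eps, 0 < eps -> a < b + eps) -> a <= b.
Proof. intro H. apply Rnot_lt_le. intro C. specialize (H (a - b)). lra. Qed.

Lemma lub_approx {E : R -> Prop} {m eps : R} :
  is_lub E m -> 0 < eps -> exists r, E r /\ m - eps < r.
Proof.
  intros [Hu Hl] He. apply NNPP. intro N.
  enough (m <= m - eps) by lra.
  apply Hl. intros r Er. apply Rnot_lt_le. intro C. apply N. exists r. auto.
Qed.

Lemma half_pos (n : nat) : 0 < (/2) ^ n.
Proof. apply pow_lt. lra. Qed.

Lemma half_small {y : R} : 0 < y -> exists N, (/2) ^ N < y.
Proof.
  intro hy. destruct (pow_lt_1_zero (/2)) with (y := y) as [N HN]; auto.
  - rewrite Rabs_right; lra.
  - exists N. specialize (HN N (le_n N)). rewrite Rabs_right in HN; auto.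
    left; apply half_pos.
Qed.

Lemma half_mono (n m : nat) : (n <= m)%nat -> (/2) ^ m <= (/2) ^ n.
Proof.
  move/leP => H. induction H as [|m _ IH]; [lra|].
  simpl. have := half_pos m. lra.
Qed.

Section GeometricLimit.
Variables (T : Type) (d : T -> T -> R).
Hypothesis Hd : is_metric d.
Variables (u : nat -> T) (c : R).
Hypothesis Hstep : forall n, d (u n) (u (S n)) < c * (/2) ^ n.

Lemma step_scale_pos : 0 < c.
Proof. have := Hstep 0. have := proj1 Hd (u 0) (u 1). simpl. lra. Qed.

(* Triangle inequality along the steps, summing the geometric series. *)
Lemma geometric_drift (n m : nat) :
  d (u n) (u (n + m)%nat) <= 2 * c * (/2) ^ n - 2 * c * (/2) ^ (n + m)%nat.
Proof.
  destruct Hd as [_ [Dzero [_ Dtri]]].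
  induction m as [|m IH].
  - rewrite addn0 (proj2 (Dzero _ _) erefl). lra.
  - rewrite addnS.
    eapply Rle_trans; [apply (Dtri _ (u (n + m)%nat))|].
    have := Hstep (n + m)%nat. simpl. lra.
Qed.

Lemma geometric_bound {N m : nat} : (N <= m)%nat -> d (u N) (u m) <= 2 * c * (/2) ^ N.
Proof.
  intro Hm. rewrite -(subnKC Hm).
  have := geometric_drift N (m - N).
  have : 0 <= c * (/2) ^ (N + (m - N))%nat.
  { apply Rmult_le_pos; [have := step_scale_pos|have := half_pos (N + (m - N))%nat]; lra. }
  lra.
Qed.

Lemma geometric_limit : complete_metric d ->
  exists l, forall n, d (u n) l <= 2 * c * (/2) ^ n.
Proof.
  destruct Hd as [_ [_ [Dsym Dtri]]]. have Hc := step_scale_pos.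
  intro Hcomp. destruct (Hcomp u) as [l Hl].
  - intros eps He. destruct (@half_small (eps / (4 * c))) as [N HN].
    { apply Rdiv_lt_0_compat; lra. }
    exists N. intros m k Hm Hk. eapply Rle_lt_trans; [apply (Dtri _ (u N))|].
    rewrite Dsym. have := geometric_bound Hm. have := geometric_bound Hk.
    apply Rmult_lt_compat_l with (r := 4 * c) in HN; [|lra].
    field_simplify in HN; lra.
  - exists l. intro n. apply le_of_close. intros eps He.
    destruct (Hl eps He) as [N HN].
    eapply Rle_lt_trans; [apply (Dtri _ (u (n + N)%nat))|].
    have := geometric_bound (leq_addr N n). have := HN (n + N)%nat (leq_addl _ _). lra.
Qed.

End GeometricLimit.

Arguments geometric_limit {T d} Hd {u c}.

Section AdditiveMap.
Import GRing.Theory.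
Local Open Scope ring_scope.
Variables (A Q : zmodType) (pi : A -> Q).
Hypothesis pi_add : forall a b, pi (a + b) = pi a + pi b.

Lemma pi_zero : pi 0 = 0.
Proof. by apply: (@addrI _ (pi 0)); rewrite -pi_add !addr0. Qed.

Lemma pi_sub a b : pi (a - b) = pi a - pi b.
Proof.
  have piN : pi (- b) = - pi b.
  { by apply: (@addrI _ (pi b)); rewrite -pi_add !subrr pi_zero. }
  by rewrite pi_add piN.
Qed.

End AdditiveMap.

Arguments pi_zero {A Q pi}.
Arguments pi_sub {A Q pi}.

Section QuotientMetric.
Import GRing.Theory.
Local Notation "a +g b" := (GRing.add a b) (at level 50, left associativity).
Local Notation "a -g b" := (GRing.add a (GRing.opp b)) (at level 50, left associativity).
Variables (A Q : zmodType) (d : A -> A -> R) (B : A -> Prop) (pi : A -> Q).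
Hypothesis Hm : is_metric d.
Hypothesis Hinv : forall x y z : A, d (x +g z) (y +g z) = d x y.
Hypothesis Hpi : quotient_map B pi.

Lemma qd_sym {q q' e} : qdist_lt d pi q q' e -> qdist_lt d pi q' q e.
Proof.
  intros [a [a' [P1 [P2 D]]]]. exists a', a. destruct Hm as [_ [_ [Hs _]]].
  rewrite Hs. auto.
Qed.

Lemma qd_mono {q q' e e'} : e <= e' -> qdist_lt d pi q q' e -> qdist_lt d pi q q' e'.
Proof. intros H [a [a' [P1 [P2 D]]]]. exists a, a'. repeat split; auto. lra. Qed.

(* Any representative of q has a representative of q' within distance e,
   by translation invariance of d. *)
Lemma qd_lift {a q q' e} : pi a = q -> qdist_lt d pi q q' e ->
  exists a', pi a' = q' /\ d a a' < e.
Proof.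
  intros Ha [b [b' [Pb [Pb' D]]]]. destruct Hpi as [Hadd _].
  exists (b' +g (a -g b)). split.
  - by rewrite Hadd (pi_sub Hadd) Ha Pb Pb' subrr addr0.
  - by rewrite -{1}(subrK b a) [a -g b +g b]addrC Hinv.
Qed.

Lemma qd_tri {q1 q2 q3 e1 e2} : qdist_lt d pi q1 q2 e1 -> qdist_lt d pi q2 q3 e2 ->
  qdist_lt d pi q1 q3 (e1 + e2).
Proof.
  intros [a1 [a2 [P1 [P2 D1]]]] H2.
  destruct (qd_lift P2 H2) as [a3 [P3 D3]].
  exists a1, a3. repeat split; auto.
  destruct Hm as [_ [_ [_ Ht]]]. eapply Rle_lt_trans; [apply (Ht _ a2)|]. lra.
Qed.

Lemma coset_closed (HB : closed_subgroup d B) {u : nat -> A} {l : A} {q : Q} :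
  (forall n, pi (u n) = q) -> seq_lim d u l -> pi l = q.
Proof.
  intros Hu Hl. destruct Hpi as [Hadd [_ Hker]]. destruct HB as [_ [_ Hcl]].
  have Bshift : B (l -g u 0%nat).
  { apply (Hcl (fun n => u n -g u 0%nat)).
    - intro n. apply Hker. by rewrite (pi_sub Hadd) !Hu subrr.
    - intros eps He. destruct (Hl eps He) as [N HN]. exists N. intros n Hn.
      rewrite Hinv. auto. }
  apply Hker in Bshift. rewrite (pi_sub Hadd) Hu in Bshift.
  exact: (subr0_eq Bshift).
Qed.

Lemma qd_zero (HB : closed_subgroup d B) q q' :
  (forall e, 0 < e -> qdist_lt d pi q q' e) -> q = q'.
Proof.
  intro H. destruct Hpi as [Hadd _].
  have Hreps : forall n, exists c : A, pi c = q -g q' /\ d c (GRing.zero : A) < (/2) ^ n.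
  { intro n. destruct (H _ (half_pos n)) as [a [a' [P1 [P2 D]]]].
    exists (a -g a'). split.
    - by rewrite (pi_sub Hadd) P1 P2.
    - by rewrite -(subrr a') Hinv. }
  destruct (choice _ Hreps) as [c Hc].
  have Hlim : seq_lim d c (GRing.zero : A).
  { intros eps He. destruct (half_small He) as [N HN]. exists N. intros n Hn.
    eapply Rlt_le_trans; [apply Hc|].
    apply Rle_trans with ((/2) ^ N); [|lra].
    exact: half_mono. }
  have E := coset_closed HB (fun n => proj1 (Hc n)) Hlim.
  rewrite (pi_zero Hadd) in E. apply/eqP. rewrite -subr_eq0 E. by [].
Qed.

Lemma qd_limit (HB : closed_subgroup d B) q l :
  (forall e, 0 < e -> exists a, qdist_lt d pi q (pi a) e /\ d a l < e) -> pi l = q.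
Proof.
  intro H. symmetry. apply (qd_zero HB). intros e He.
  destruct (H (e / 2)) as [a [Hq Hd]]; [lra|].
  replace e with (e / 2 + e / 2) by field.
  apply (qd_tri Hq). by exists a, l.
Qed.

End QuotientMetric.

Arguments qd_sym {A Q d pi} Hm {q q' e}.
Arguments qd_mono {A Q d pi q q' e e'}.
Arguments qd_lift {A Q d B pi} Hinv Hpi {a q q' e}.
Arguments qd_tri {A Q d B pi} Hm Hinv Hpi {q1 q2 q3 e1 e2}.
Arguments qd_limit {A Q d B pi} Hm Hinv Hpi HB {q l}.

Section Level.
Variables (X : nat -> Type) (dX : forall i, X i -> X i -> R) (n : nat).
Notation T := (Pt X n).

Lemma pball_mono {x y : T} {d1 d2} : d1 <= d2 -> pball dX x d1 y -> pball dX x d2 y.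
Proof. intros H P j hj. specialize (P j hj). lra. Qed.

Lemma pcont_comb {op : R -> R -> R} :
  (forall a b c e eps, Rabs (a - c) < eps -> Rabs (b - e) < eps ->
     Rabs (op a b - op c e) < eps) ->
  forall {g h : T -> R}, pcont dX g -> pcont dX h -> pcont dX (fun x => op (g x) (h x)).
Proof.
  intros Hop g h Hg Hh x eps He.
  destruct (Hg x eps He) as [d1 [Hd1 P1]]. destruct (Hh x eps He) as [d2 [Hd2 P2]].
  exists (Rmin d1 d2). split; [apply Rmin_glb_lt; auto|].
  intros y Hy. apply Hop.
  - apply P1. eapply pball_mono; [|exact Hy]. apply Rmin_l.
  - apply P2. eapply pball_mono; [|exact Hy]. apply Rmin_r.
Qed.

Hypothesis dX_refl : forall j (a : X j), lt j n -> dX j a a = 0.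

Lemma pball_self (x : T) del : 0 < del -> pball dX x del x.
Proof. intros H j hj. rewrite dX_refl; auto. Qed.

(* Selections from a finite list L of functions: the order pattern of the
   values of L at y, and the function which at y takes the value of the
   member of L that a selector c assigns to the pattern at y. *)
Definition Rleb (a b : R) : bool := if Rle_dec a b then true else false.
Notation patT m := {ffun 'I_m * 'I_m -> bool}.
Notation selT m := {ffun patT m -> 'I_m}.

Definition nthf (L : list (T -> R)) (i : nat) (y : T) : R := List.nth i L (fun _ => 0) y.

Definition pattern (L : list (T -> R)) (y : T) : patT (length L) :=
  [ffun ij : 'I_(length L) * 'I_(length L) =>
     Rleb (nthf L (ij.1 : nat) y) (nthf L (ij.2 : nat) y)].

Definition select (L : list (T -> R)) (c : selT (length L)) (y : T) : R :=
  nthf L (c (pattern L y) : nat) y.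

Definition sel_max {m : nat} (c1 c2 : selT m) : selT m :=
  [ffun P : patT m => if P (c1 P, c2 P) then c2 P else c1 P].
Definition sel_min {m : nat} (c1 c2 : selT m) : selT m :=
  [ffun P : patT m => if P (c1 P, c2 P) then c1 P else c2 P].

Lemma select_max L c1 c2 y : select L (sel_max c1 c2) y = Rmax (select L c1 y) (select L c2 y).
Proof.
  rewrite /select /sel_max /Rmax ffunE {1}/pattern ffunE /= /Rleb.
  by destruct (Rle_dec _ _).
Qed.

Lemma select_min L c1 c2 y : select L (sel_min c1 c2) y = Rmin (select L c1 y) (select L c2 y).
Proof.
  rewrite /select /sel_min /Rmin ffunE {1}/pattern ffunE /= /Rleb.
  by destruct (Rle_dec _ _).
Qed.

Lemma In_enum (U : finType) (x : U) : List.In x (enum U).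
Proof.
  have : x \in enum U by rewrite mem_enum.
  elim: (enum U) => [|a s IH] //=.
  rewrite seq.in_cons => /orP [/eqP ->|H]; [left|right]; auto.
Qed.

Variable K : (T -> R) -> Prop.
Hypothesis K_cont : forall {xi}, K xi -> pcont dX xi /\ forall x, 0 <= xi x <= 1.
Hypothesis K_lf : loc_finite dX K.

Definition local_list (x : T) del (L : list (T -> R)) : Prop :=
  0 < del /\ forall xi, K xi -> exists eta, In eta L /\ forall y, pball dX x del y -> xi y = eta y.

(* The l-completion of K: continuous [0,1]-valued functions which, on every
   ball carrying a local list L, coincide with a selection from L. *)
Definition lclosure (h : T -> R) : Prop :=
  pcont dX h /\ (forall x, 0 <= h x <= 1) /\
  forall x del L, local_list x del L -> exists c : selT (length L),
    forall y, pball dX x del y -> h y = select L c y.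

(* K lies in its l-completion: each member is locally a constant selection. *)
Lemma lclosure_ext {xi} : K xi -> lclosure xi.
Proof.
  intro Hxi. destruct (K_cont Hxi) as [Hc Hb]. split; [|split]; auto.
  intros x del L [Hdel HL]. destruct (HL xi Hxi) as [eta [Hin Heq]].
  destruct (In_nth _ _ (fun _ => 0) Hin) as [i [Hi Hnth]].
  have Hi' : (i < length L)%nat by apply/ltP.
  exists [ffun _ => Ordinal Hi']. intros y Hy. rewrite /select /nthf ffunE /= Hnth. auto.
Qed.

Lemma lclosure_max g h : lclosure g -> lclosure h -> lclosure (fun x => Rmax (g x) (h x)).
Proof.
  intros [Hg1 [Hg2 Hg3]] [Hh1 [Hh2 Hh3]]. split; [|split].
  - exact: (pcont_comb Rmax_close).
  - intro x. specialize (Hg2 x). specialize (Hh2 x). unfold Rmax. destruct (Rle_dec _ _); lra.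
  - intros x del L Hs. destruct (Hg3 x del L Hs) as [c1 P1]. destruct (Hh3 x del L Hs) as [c2 P2].
    exists (sel_max c1 c2). intros y Hy. rewrite select_max P1 ?P2; auto.
Qed.

Lemma lclosure_min g h : lclosure g -> lclosure h -> lclosure (fun x => Rmin (g x) (h x)).
Proof.
  intros [Hg1 [Hg2 Hg3]] [Hh1 [Hh2 Hh3]]. split; [|split].
  - exact: (pcont_comb Rmin_close).
  - intro x. specialize (Hg2 x). specialize (Hh2 x). unfold Rmin. destruct (Rle_dec _ _); lra.
  - intros x del L Hs. destruct (Hg3 x del L Hs) as [c1 P1]. destruct (Hh3 x del L Hs) as [c2 P2].
    exists (sel_min c1 c2). intros y Hy. rewrite select_min P1 ?P2; auto.
Qed.

(* Only finitely many selectors exist for a given list, whence local finiteness. *)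
Lemma lclosure_lf : loc_finite dX lclosure.
Proof.
  intro x. destruct (K_lf x) as [del [Hdel [L HL]]].
  have Hs : local_list x del L by split.
  exists del. split; auto. exists (List.map (select L) (enum (selT (length L)))).
  intros h [_ [_ Hh]]. destruct (Hh x del L Hs) as [c Pc].
  exists (select L c). split; auto. apply in_map. apply In_enum.
Qed.

(* Limits of directed subfamilies, for an abstract order le on R (used
   with <= for upward and >= for downward directed families). *)
Section DirectedLimit.
Variable le : R -> R -> Prop.
Hypothesis le_anti : forall a b, le a b -> le b a -> a = b.
Hypothesis le_trans : forall a b c, le a b -> le b c -> le a c.
Variables (G : (T -> R) -> Prop) (h : T -> R).
Hypothesis G_sub : forall {g}, G g -> lclosure g.
Hypothesis G_ne : exists g, G g.
Hypothesis G_dir : forall {g1 g2}, G g1 -> G g2 ->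
  exists g3, G g3 /\ (forall x, le (g1 x) (g3 x)) /\ (forall x, le (g2 x) (g3 x)).
Hypothesis G_lim : forall x {eps}, 0 < eps -> exists g0, G g0 /\
  forall g, G g -> (forall y, le (g0 y) (g y)) -> Rabs (g x - h x) < eps.

Lemma directed_dominant x del L (S : list (selT (length L))) :
  exists g', G g' /\ forall c, In c S -> forall g, G g ->
    (forall y, pball dX x del y -> g y = select L c y) ->
    forall y, pball dX x del y -> le (g y) (g' y).
Proof.
  destruct G_ne as [g0 Hg0].
  induction S as [|c S [g' [Hg' P']]].
  - exists g0. split; auto. intros c [].
  - destruct (classic (exists gc, G gc /\
      forall y, pball dX x del y -> gc y = select L c y)) as [[gc [Hgc Pgc]]|Nc].
    + destruct (G_dir Hg' Hgc) as [g3 [Hg3 [L1 L2]]].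
      exists g3. split; auto. intros c0 [<-|Hin] g Hg Pg y Hy.
      * rewrite Pg // -Pgc //.
      * eapply le_trans; [eapply P'; eauto|]. apply L1.
    + exists g'. split; auto. intros c0 [<-|Hin] g Hg Pg y Hy.
      * exfalso. apply Nc. exists g. split; auto.
      * eapply P'; eauto.
Qed.

(* Hence on a ball carrying a local list the directed family is eventually
   constant, and its limit h agrees there with one of its members. *)
Lemma directed_limit_local {x del L} : local_list x del L ->
  exists gs, G gs /\ forall y, pball dX x del y -> h y = gs y.
Proof.
  intro Hs. destruct (@directed_dominant x del L (enum (selT (length L)))) as [gs [Hgs Pgs]].
  exists gs. split; auto.
  have Stable : forall g, G g -> (forall y, le (gs y) (g y)) ->
      forall y, pball dX x del y -> g y = gs y.
  { intros g Hg Hle y Hy. destruct (G_sub Hg) as [_ [_ Hsel]].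
    destruct (Hsel x del L Hs) as [c Pc].
    apply le_anti; auto. eapply Pgs; eauto. apply In_enum. }
  intros y Hy. symmetry. apply eq_of_close. intros eps He.
  destruct (G_lim y He) as [g1 [Hg1 P1]].
  destruct (G_dir Hg1 Hgs) as [g3 [Hg3 [L1 L2]]].
  rewrite -(Stable g3 Hg3 L2 y Hy). apply P1; auto.
Qed.

(* The limit h inherits continuity, bounds and local selections from the
   members it locally coincides with. *)
Lemma lclosure_lim : lclosure h.
Proof.
  split; [|split].
  - intros x eps He. destruct (K_lf x) as [del [Hdel [L HL]]].
    destruct (@directed_limit_local x del L) as [gs [Hgs Pgs]]; [by split|].
    destruct (G_sub Hgs) as [Hc _]. destruct (Hc x eps He) as [d1 [Hd1 P1]].
    exists (Rmin d1 del). split; [apply Rmin_glb_lt; auto|].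
    intros y Hy. rewrite !Pgs.
    + apply P1. eapply pball_mono; [|exact Hy]. apply Rmin_l.
    + by apply pball_self.
    + eapply pball_mono; [|exact Hy]. apply Rmin_r.
  - intro x. destruct (K_lf x) as [del [Hdel [L HL]]].
    destruct (@directed_limit_local x del L) as [gs [Hgs Pgs]]; [by split|].
    rewrite Pgs; [|by apply pball_self]. apply (G_sub Hgs).
  - intros x del L Hs. destruct (directed_limit_local Hs) as [gs [Hgs Pgs]].
    destruct (G_sub Hgs) as [_ [_ Hsel]]. destruct (Hsel x del L Hs) as [c Pc].
    exists c. intros y Hy. rewrite Pgs; auto.
Qed.

End DirectedLimit.

Lemma lclosure_dissection : K (fun _ => 0) -> K (fun _ => 1) ->
  cont_dissection dX lclosure /\ l_complete lclosure.
Proof.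
  intros K0 K1. split.
  - split; [|split; [|split]].
    + intros xi [Hc [Hb _]]. split; [exact Hc|exact Hb].
    + exact: lclosure_ext.
    + exact: lclosure_ext.
    + exact: lclosure_lf.
  - split; [|split; [|split]].
    + exact: lclosure_max.
    + exact: lclosure_min.
    + intros G h HG [Hne Hdir] Hl.
      apply (@lclosure_lim Rle) with (G := G); auto.
      * intros; apply Rle_antisym; auto.
      * intros; eapply Rle_trans; eauto.
    + intros G h HG [Hne Hdir] Hl.
      apply (@lclosure_lim (fun a b => b <= a)) with (G := G); auto.
      * intros; apply Rle_antisym; auto.
      * intros; simpl in *; eapply Rle_trans; eauto.
Qed.

End Level.

Arguments pball_self {X dX n} dX_refl {x del}.
Arguments lclosure_dissection {X dX n} dX_refl {K} K_cont K_lf.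

Lemma loc_finite_union {X : nat -> Type} {dX : forall i, X i -> X i -> R} {n : nat}
  {F G : (Pt X n -> R) -> Prop} :
  loc_finite dX F -> loc_finite dX G -> loc_finite dX (fun xi => F xi \/ G xi).
Proof.
  intros HF HG x. destruct (HF x) as [d1 [Hd1 [L1 P1]]]. destruct (HG x) as [d2 [Hd2 [L2 P2]]].
  exists (Rmin d1 d2). split; [apply Rmin_glb_lt; auto|]. exists (L1 ++ L2).
  intros xi [H|H].
  - destruct (P1 xi H) as [eta [Hin Heq]]. exists eta. split; [apply in_or_app; auto|].
    intros y Hy. apply Heq. eapply pball_mono; [|exact Hy]. apply Rmin_l.
  - destruct (P2 xi H) as [eta [Hin Heq]]. exists eta. split; [apply in_or_app; auto|].
    intros y Hy. apply Heq. eapply pball_mono; [|exact Hy]. apply Rmin_r.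
Qed.

(* Two continuous dissections over the same space have a common l-complete
   refinement: the l-completion of their union. *)
Lemma common_refinement {X : nat -> Type} {dX : forall i, X i -> X i -> R} {n : nat}
  (dX_refl : forall j (a : X j), lt j n -> dX j a a = 0)
  {F G : (Pt X n -> R) -> Prop} :
  cont_dissection dX F -> cont_dissection dX G ->
  exists H, cont_dissection dX H /\ l_complete H /\
    (forall xi, F xi -> H xi) /\ (forall xi, G xi -> H xi).
Proof.
  intros [F1 [F2 [F3 F4]]] [G1 [G2 [G3 G4]]].
  set K := fun xi => F xi \/ G xi.
  have K_cont : forall xi, K xi -> pcont dX xi /\ forall x, 0 <= xi x <= 1.
  { intros xi [H|H]; auto. }
  have [H_dis H_lc] := lclosure_dissection dX_refl K_cont (loc_finite_union F4 G4)
    (or_introl F2) (or_introl F3).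
  exists (lclosure X dX n K). split; [exact H_dis|split; [exact H_lc|split]].
  - intros xi H. apply lclosure_ext; auto. left; auto.
  - intros xi H. apply lclosure_ext; auto. right; auto.
Qed.

Section Envelopes.
Variables (T : Type) (F : (T -> R) -> Prop).
Hypothesis F_lc : l_complete F.
Hypothesis F_bnd : forall xi, F xi -> forall x, 0 <= xi x <= 1.

(* A nonempty subfamily closed under max has its pointwise supremum in F:
   the subfamily is upward directed and converges to its supremum. *)
Lemma sup_member (G : (T -> R) -> Prop) :
  (forall g, G g -> F g) -> (exists g, G g) ->
  (forall g1 g2, G g1 -> G g2 -> G (fun x => Rmax (g1 x) (g2 x))) ->
  exists h, F h /\ forall x, (forall g, G g -> g x <= h x) /\
    (forall eps, 0 < eps -> exists g, G g /\ h x - eps < g x).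
Proof.
  intros G_sub [g0 Hg0] G_max.
  set E := fun x r => exists g, G g /\ r = g x.
  have Ebnd : forall x, bound (E x).
  { intro x. exists 1. intros r [g [Hg ->]]. apply (F_bnd _ (G_sub g Hg)). }
  have Ene : forall x, exists r, E x r by intro x; exists (g0 x), g0.
  set h := fun x => proj1_sig (completeness (E x) (Ebnd x) (Ene x)).
  have Hh : forall x, is_lub (E x) (h x).
  { intro x. exact (proj2_sig (completeness (E x) (Ebnd x) (Ene x))). }
  have Happrox : forall x, (forall g, G g -> g x <= h x) /\
      (forall eps, 0 < eps -> exists g, G g /\ h x - eps < g x).
  { intro x. split.
    - intros g Hg. apply (Hh x). exists g. auto.
    - intros eps He. destruct (lub_approx (Hh x) He) as [r [[g [Hg ->]] Hr]]. eauto. }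
  exists h. split; auto.
  destruct F_lc as [_ [_ [F_up _]]]. apply (F_up G); auto.
  - split; [eauto|]. intros g1 g2 Hg1 Hg2. exists (fun x => Rmax (g1 x) (g2 x)).
    repeat split; auto; intro x; [apply Rmax_l|apply Rmax_r].
  - intros x eps He. destruct (proj2 (Happrox x) eps He) as [g1 [Hg1 Hlt]].
    exists g1. split; auto. intros g Hg Hle.
    have := Hle x. have := proj1 (Happrox x) g Hg. intros. apply Rabs_def1; lra.
Qed.

Lemma inf_member (G : (T -> R) -> Prop) :
  (forall g, G g -> F g) -> (exists g, G g) ->
  (forall g1 g2, G g1 -> G g2 -> G (fun x => Rmin (g1 x) (g2 x))) ->
  exists h, F h /\ forall x, (forall g, G g -> h x <= g x) /\
    (forall eps, 0 < eps -> exists g, G g /\ g x < h x + eps).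
Proof.
  intros G_sub [g0 Hg0] G_min.
  set E := fun x r => exists g, G g /\ r = - g x.
  have Ebnd : forall x, bound (E x).
  { intro x. exists 0. intros r [g [Hg ->]]. have := F_bnd _ (G_sub g Hg) x. lra. }
  have Ene : forall x, exists r, E x r by intro x; exists (- g0 x), g0.
  set h := fun x => - proj1_sig (completeness (E x) (Ebnd x) (Ene x)).
  have Hh : forall x, is_lub (E x) (- h x).
  { intro x. rewrite /h Ropp_involutive. exact (proj2_sig (completeness (E x) (Ebnd x) (Ene x))). }
  have Happrox : forall x, (forall g, G g -> h x <= g x) /\
      (forall eps, 0 < eps -> exists g, G g /\ g x < h x + eps).
  { intro x. split.
    - intros g Hg. enough (- g x <= - h x) by lra. apply (Hh x). exists g. auto.
    - intros eps He. destruct (lub_approx (Hh x) He) as [r [[g [Hg ->]] Hr]].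
      exists g. split; auto. lra. }
  exists h. split; auto.
  destruct F_lc as [_ [_ [_ F_down]]]. apply (F_down G); auto.
  - split; [eauto|]. intros g1 g2 Hg1 Hg2. exists (fun x => Rmin (g1 x) (g2 x)).
    repeat split; auto; intro x; [apply Rmin_l|apply Rmin_r].
  - intros x eps He. destruct (proj2 (Happrox x) eps He) as [g1 [Hg1 Hlt]].
    exists g1. split; auto. intros g Hg Hle.
    have := Hle x. have := proj1 (Happrox x) g Hg. intros. apply Rabs_def1; lra.
Qed.

End Envelopes.

Lemma list_max_below {T : Type} (L : list (T -> R)) (x : T) (t : R) : 0 < t ->
  exists m, m < t /\ forall eta, In eta L -> eta x < t -> eta x <= m.
Proof.
  intro ht. induction L as [|e L [m [Hm Pm]]].
  - exists 0. split; auto. intros eta [].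
  - destruct (Rlt_dec (e x) t) as [Hl|Hn].
    + exists (Rmax m (e x)). split; [apply Rmax_lub_lt; auto|].
      intros eta [<-|Hin] Heta; [apply Rmax_r|].
      eapply Rle_trans; [apply Pm; auto|apply Rmax_l].
    + exists m. split; auto. intros eta [<-|Hin] Heta; [contradiction|auto].
Qed.

Section WedgeBounds.
Variables (X : nat -> Type) (dX : forall i, X i -> X i -> R) (n : nat).
Hypothesis dX_refl : forall j (a : X j), lt j n -> dX j a a = 0.
Variable F : (Pt X n -> R) -> Prop.
Hypothesis F_dis : cont_dissection dX F.
Hypothesis F_lc : l_complete F.

Lemma dissection_bounded : forall xi, F xi -> forall x, 0 <= xi x <= 1.
Proof. intros xi Hxi. apply (proj1 F_dis xi Hxi). Qed.

Lemma greatest_below (x : Pt X n) (t : R) : 0 < t ->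
  exists xi1, F xi1 /\ xi1 x < t /\ forall xi, F xi -> xi x < t -> fle xi xi1.
Proof.
  intro ht. destruct F_dis as [_ [F0 [_ F_lf]]]. destruct F_lc as [F_max _].
  destruct (@sup_member _ F F_lc dissection_bounded (fun xi => F xi /\ xi x < t))
    as [h [Fh Hh]].
  - intros g [Hg _]; auto.
  - exists (fun _ => 0). auto.
  - intros g1 g2 [Hg1 T1] [Hg2 T2]. split; [auto|]. apply Rmax_lub_lt; auto.
  - exists h. split; [|split]; auto.
    + destruct (F_lf x) as [del [Hdel [L HL]]].
      destruct (list_max_below L x t ht) as [m [Hm Pm]].
      have Hbelow : forall xi, F xi -> xi x < t -> xi x <= m.
      { intros xi Hxi Hxt. destruct (HL xi Hxi) as [eta [Hin Heq]].
        rewrite (Heq x (pball_self dX_refl Hdel)) in Hxt |- *. auto. }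
      apply Rle_lt_trans with m; auto. apply le_of_close. intros eps He.
      destruct (proj2 (Hh x) eps He) as [g [[Hg Hgt] Hgx]].
      have := Hbelow g Hg Hgt. lra.
    + intros xi Hxi Hxt y. apply (proj1 (Hh y)). auto.
Qed.

Lemma least_above (x : Pt X n) (t : R) : t <= 1 ->
  exists xi2, F xi2 /\ t <= xi2 x /\ forall xi, F xi -> t <= xi x -> fle xi2 xi.
Proof.
  intro ht. destruct F_dis as [_ [_ [F1 _]]]. destruct F_lc as [_ [F_min _]].
  destruct (@inf_member _ F F_lc dissection_bounded (fun xi => F xi /\ t <= xi x))
    as [h [Fh Hh]].
  - intros g [Hg _]; auto.
  - exists (fun _ => 1). auto.
  - intros g1 g2 [Hg1 T1] [Hg2 T2]. split; [auto|]. apply Rmin_glb; auto.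
  - exists h. split; [|split]; auto.
    + apply le_of_close. intros eps He.
      destruct (proj2 (Hh x) eps He) as [g [[Hg Hgt] Hgx]]. lra.
    + intros xi Hxi Hxt y. apply (proj1 (Hh y)). auto.
Qed.

End WedgeBounds.

Arguments greatest_below {X dX n} dX_refl {F} F_dis F_lc x {t}.
Arguments least_above {X dX n F} F_dis F_lc x {t}.

(* The extremal pair of F at (x,t): the greatest member of F below t at x and
   the least member of F at or above t at x.  Their wedge is the smallest
   F-wedge containing (x,t). *)
Definition extremal_pair {T : Type} (F : (T -> R) -> Prop) (x : T) (t : R)
  (xi1 xi2 : T -> R) : Prop :=
  F xi1 /\ F xi2 /\ xi1 x < t /\ t <= xi2 x /\
  (forall xi, F xi -> xi x < t -> fle xi xi1) /\
  (forall xi, F xi -> t <= xi x -> fle xi2 xi).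

Lemma extremal_nesting {T : Type} {F : (T -> R) -> Prop}
  (F_max : forall g h, F g -> F h -> F (fun x => Rmax (g x) (h x)))
  (F_min : forall g h, F g -> F h -> F (fun x => Rmin (g x) (h x)))
  {x x' : T} {t t' : R} {xi1 xi2 eta1 eta2 : T -> R} :
  extremal_pair F x t xi1 xi2 ->
  F eta1 -> F eta2 -> eta1 x' < t' -> t' <= eta2 x' ->
  xi1 x' < t' -> t' <= xi2 x' ->
  fle eta1 xi1 /\ fle xi2 eta2.
Proof.
  intros [F1 [F2 [H1 [H2 [E1 E2]]]]] Fe1 Fe2 He1 He2 C1 C2. split.
  - apply E1; auto. apply Rnot_le_lt. intro Hc.
    (* otherwise max xi1 (min eta1 xi2) would be a member at or above t at x
       that is strictly below xi2 at x' *)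
    set xi := fun y => Rmax (xi1 y) (Rmin (eta1 y) (xi2 y)).
    have Le : fle xi2 xi.
    { apply E2; [by apply F_max, F_min|].
      unfold xi. eapply Rle_trans; [|apply Rmax_r]. apply Rmin_glb; lra. }
    have := Le x'. unfold xi.
    have : Rmax (xi1 x') (Rmin (eta1 x') (xi2 x')) < t'.
    { apply Rmax_lub_lt; auto. eapply Rle_lt_trans; [apply Rmin_l|]; auto. }
    lra.
  - apply E2; auto. apply Rnot_lt_le. intro Hc.
    set xi := fun y => Rmin (xi2 y) (Rmax (eta2 y) (xi1 y)).
    have Le : fle xi xi1.
    { apply E1; [by apply F_min, F_max|].
      unfold xi. eapply Rle_lt_trans; [apply Rmin_r|]. apply Rmax_lub_lt; lra. }
    have := Le x'. unfold xi.
    have : t' <= Rmin (xi2 x') (Rmax (eta2 x') (xi1 x')).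
    { apply Rmin_glb; auto. eapply Rle_trans; [|apply Rmax_l]; auto. }
    lra.
Qed.

Lemma dX_refl_level {X : nat -> Type} {dX : forall i, X i -> X i -> R} {p : nat} :
  (forall j (a : X j), lt j p -> dX j a a = 0) ->
  forall {k}, lt k p -> forall j (a : X j), lt j (S k) -> dX j a a = 0.
Proof. intros dX_refl k hk j a hj. apply dX_refl. eapply Nat.lt_le_trans; eauto. Qed.

(* For an ascending tuple of l-complete continuous dissections, the cell of a
   point z -- the multiwedge whose k-th wedge is the extremal wedge of z at
   level k -- is a minimal multiwedge. *)
Section Cells.
Variables (X : nat -> Type) (dX : forall i, X i -> X i -> R) (p : nat).
Hypothesis dX_refl : forall j (a : X j), lt j p -> dX j a a = 0.

Definition xk (z : Dom X p) k (hk : lt k p) : Pt X (S k) := restr hk (fst z).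
Definition tk (z : Dom X p) k (hk : lt k p) : R := proj1_sig (snd z k hk).

Definition good_tuple (Fs : forall k : nat, (Pt X (S k) -> R) -> Prop) : Prop :=
  forall k, lt k p -> cont_dissection dX (Fs k) /\ l_complete (Fs k).

Definition cell_of (Fs : forall k : nat, (Pt X (S k) -> R) -> Prop) (z : Dom X p)
  (xi1s xi2s : forall k, Pt X (S k) -> R) : Prop :=
  forall k (hk : lt k p), extremal_pair (Fs k) (xk z k hk) (tk z k hk) (xi1s k) (xi2s k).

Lemma cell_exists {Fs} : good_tuple Fs -> forall z, exists xi1s xi2s, cell_of Fs z xi1s xi2s.
Proof.
  intros HF z.
  have Ex : forall k, exists pr : (Pt X (S k) -> R) * (Pt X (S k) -> R),
      forall hk : lt k p, extremal_pair (Fs k) (xk z k hk) (tk z k hk) pr.1 pr.2.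
  { intro k. destruct (Compare_dec.lt_dec k p) as [hk0|nk].
    - destruct (HF k hk0) as [Hc Hl].
      have Ht := proj2_sig (snd z k hk0).
      destruct (greatest_below (dX_refl_level dX_refl hk0) Hc Hl (xk z k hk0) (t := tk z k hk0))
        as [xi1 [A1 [A2 A3]]]; [unfold tk; simpl in Ht; lra|].
      destruct (least_above Hc Hl (xk z k hk0) (t := tk z k hk0))
        as [xi2 [B1 [B2 B3]]]; [unfold tk; simpl in Ht; lra|].
      exists (xi1, xi2). intro hk. rewrite (proof_irrelevance _ hk hk0).
      repeat split; auto.
    - exists ((fun _ => 0), (fun _ => 0)). intro hk. contradiction. }
  destruct (dependent_choice _ Ex) as [pr Hpr].
  exists (fun k => (pr k).1), (fun k => (pr k).2). intros k hk. exact (Hpr k hk).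
Qed.

Definition cell (xi1s xi2s : forall k, Pt X (S k) -> R) (w : Dom X p) : Prop :=
  forall k (hk : lt k p), xi1s k (xk w k hk) < tk w k hk /\ tk w k hk <= xi2s k (xk w k hk).

Lemma cell_multiwedge Fs xi1s xi2s :
  (forall k, lt k p -> Fs k (xi1s k) /\ Fs k (xi2s k)) -> is_multiwedge Fs (cell xi1s xi2s).
Proof.
  intro H. exists (fun k x t => xi1s k x < proj1_sig t /\ proj1_sig t <= xi2s k x). split.
  - intros k hk. exists (xi1s k), (xi2s k). destruct (H k hk). repeat split; tauto.
  - intro z. unfold cell, xk, tk. tauto.
Qed.

(* A nonempty multiwedge inside the cell of z has, at each level, a wedge
   meeting the extremal wedge of z, hence containing it (extremal_nesting). *)
Lemma cell_minimal {Fs z xi1s xi2s} : good_tuple Fs -> cell_of Fs z xi1s xi2s ->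
  minimal_multiwedge Fs (cell xi1s xi2s).
Proof.
  intros HF Hc. split; [|split].
  - apply cell_multiwedge. intros k hk. destruct (Hc k hk) as [? [? _]]. auto.
  - exists z. intros k hk. destruct (Hc k hk) as [_ [_ [? [? _]]]]. auto.
  - intros M' [Cs [HCs HM']] [w Hw] Hsub y Hy. apply HM'. intros k hk.
    destruct (HCs k hk) as [eta1 [eta2 [Fe1 [Fe2 He]]]]. apply He.
    destruct (proj1 (He _ _) (proj1 (HM' w) Hw k hk)) as [W1 W2].
    destruct (HF k hk) as [_ [F_max [F_min _]]].
    destruct (Hsub w Hw k hk) as [S1 S2].
    destruct (extremal_nesting F_max F_min (Hc k hk) Fe1 Fe2 W1 W2 S1 S2) as [M1 M2].
    destruct (Hy k hk) as [Y1 Y2].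
    have := M1 (xk y k hk). have := M2 (xk y k hk). unfold xk, tk in *. intros. split; lra.
Qed.

Lemma refine_minimal {Fs Hs} : good_tuple Fs ->
  (forall k, lt k p -> l_complete (Hs k) /\ forall xi, Fs k xi -> Hs k xi) ->
  forall M : Dom X p -> Prop, minimal_multiwedge Hs M -> forall z z', M z -> M z' ->
  exists M', minimal_multiwedge Fs M' /\ M' z /\ M' z'.
Proof.
  intros HF HH M [[Cs [HCs HM]] [_ Hmin]] z z' Hz Hz'.
  destruct (cell_exists HF z) as [xi1s [xi2s Hc]].
  have Hcz : cell xi1s xi2s z.
  { intros k hk. destruct (Hc k hk) as [_ [_ [? [? _]]]]. auto. }
  exists (cell xi1s xi2s). split; [|split]; auto.
  - exact: cell_minimal HF Hc.
  - (* M meets the cell in an Hs-multiwedge containing z, so by minimality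
       M lies inside the cell *)
    set M'' := fun w => M w /\ cell xi1s xi2s w.
    have Hmw : is_multiwedge Hs M''.
    { exists (fun k x t => Cs k x t /\ (xi1s k x < proj1_sig t /\ proj1_sig t <= xi2s k x)).
      split.
      - intros k hk. destruct (HCs k hk) as [eta1 [eta2 [Fe1 [Fe2 He]]]].
        destruct (HH k hk) as [[H_max [H_min _]] Sub].
        destruct (Hc k hk) as [C1 [C2 _]].
        exists (fun x => Rmax (eta1 x) (xi1s k x)), (fun x => Rmin (eta2 x) (xi2s k x)).
        split; [apply H_max; auto|split; [apply H_min; auto|]].
        intros x t. rewrite He. unfold Rmax, Rmin.
        destruct (Rle_dec _ _); destruct (Rle_dec _ _); split; intros; lra.
      - intro w. unfold M'', cell, xk, tk. rewrite HM. split.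
        + intros [Hw1 Hw2] k hk. split; auto.
        + intro Hw. split; intros k hk; apply Hw. }
    have Sub : forall w, M w -> M'' w.
    { apply Hmin; [exact Hmw| exists z; by split|]. intros w [? _]; auto. }
    exact (proj2 (Sub z' Hz')).
Qed.

End Cells.

Arguments refine_minimal {X dX p} dX_refl {Fs Hs}.

Lemma layered_comp {X : nat -> Type} {dX : forall i, X i -> X i -> R} {p : nat}
  {V W : Type} {g : Dom X p -> V} (phi : V -> W) :
  layered dX g -> layered dX (fun z => phi (g z)).
Proof.
  intros [Fs [HF Hg]]. exists Fs. split; auto. intros M HM z z' Hz Hz'. f_equal. eapply Hg; eauto.
Qed.

(* ... and under pointwise combination of two of them: both stay layered for
   the level-wise common refinement of their tuples. *)
Lemma layered_pair {X : nat -> Type} {dX : forall i, X i -> X i -> R} {p : nat}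
  (dX_refl : forall j (a : X j), lt j p -> dX j a a = 0)
  {V1 V2 W : Type} {g1 : Dom X p -> V1} {g2 : Dom X p -> V2} (phi : V1 -> V2 -> W) :
  layered dX g1 -> layered dX g2 -> layered dX (fun z => phi (g1 z) (g2 z)).
Proof.
  intros [Fs [HF Hg1]] [Gs [HG Hg2]].
  have Ex : forall k, exists H : (Pt X (S k) -> R) -> Prop, lt k p ->
      cont_dissection dX H /\ l_complete H /\
      (forall xi, Fs k xi -> H xi) /\ (forall xi, Gs k xi -> H xi).
  { intro k. destruct (Compare_dec.lt_dec k p) as [hk|nk].
    - destruct (common_refinement (dX_refl_level dX_refl hk) (proj1 (HF k hk)) (proj1 (HG k hk))) as [H HH].
      exists H. auto.
    - exists (fun _ => True). intro; contradiction. }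
  destruct (dependent_choice _ Ex) as [Hs HHs].
  exists Hs. split.
  - intros k hk. destruct (HHs k hk) as [? [? _]]. auto.
  - intros M HM z z' Hz Hz'.
    destruct (refine_minimal dX_refl HF (Hs := Hs)) with (M := M) (z := z) (z' := z')
      as [M1 [HM1 [A1 B1]]]; auto.
    { intros k hk. destruct (HHs k hk) as [? [? [? ?]]]. auto. }
    destruct (refine_minimal dX_refl HG (Hs := Hs)) with (M := M) (z := z) (z' := z')
      as [M2 [HM2 [A2 B2]]]; auto.
    { intros k hk. destruct (HHs k hk) as [? [? [? ?]]]. auto. }
    rewrite (Hg1 M1 HM1 z z' A1 B1) (Hg2 M2 HM2 z z' A2 B2). reflexivity.
Qed.

Section Lifting.
Variables (X : nat -> Type) (dX : forall i, X i -> X i -> R) (p : nat).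
Hypothesis dX_refl : forall j (a : X j), lt j p -> dX j a a = 0.
Variables (A Q : zmodType) (d : A -> A -> R) (B : A -> Prop) (pi : A -> Q).
Hypothesis Hm : is_metric d.
Hypothesis Hinv : forall x y z : A, d (GRing.add x z) (GRing.add y z) = d x y.
Hypothesis Hpi : quotient_map B pi.
Variables (f : Dom X p -> Q) (g : nat -> Dom X p -> Q).
Hypothesis g_layered : forall n, layered dX (g n).
Hypothesis g_close : forall n z, qdist_lt d pi (f z) (g n z) ((/2) ^ n).

(* Consecutive approximants are within 2^-n + 2^-(n+1) < 2 * 2^-n. *)
Lemma consecutive_close n z : qdist_lt d pi (g n z) (g (S n) z) (2 * (/2) ^ n).
Proof.
  apply (qd_mono (e := (/2) ^ n + (/2) ^ (S n))).
  - simpl. have := half_pos n. lra.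
  - apply (qd_tri Hm Hinv Hpi (q2 := f z)); [apply (qd_sym Hm)|]; apply g_close.
Qed.

(* Starting from an arbitrary lift of g 0 and moving, at each step, to a
   nearby lift of the next approximant (a function of the current value and
   of the next approximant, hence layered), one gets layered lifts of the g n
   whose consecutive distances decay geometrically. *)
Lemma layered_lifts : exists F : nat -> Dom X p -> A, forall n,
  layered dX (F n) /\ (forall z, pi (F n z) = g n z) /\
  (forall z, d (F n z) (F (S n) z) < 2 * (/2) ^ n).
Proof.
  destruct (choice _ (proj1 (proj2 Hpi))) as [s Hs].
  set nudge := fun n (a : A) (q : Q) =>
    epsilon (inhabits a) (fun a' => pi a' = q /\ d a a' < 2 * (/2) ^ n).
  have Hnudge : forall n a z, pi a = g n z ->
      pi (nudge n a (g (S n) z)) = g (S n) z /\ d a (nudge n a (g (S n) z)) < 2 * (/2) ^ n.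
  { intros n a z Ha. apply epsilon_spec.
    destruct (qd_lift Hinv Hpi Ha (consecutive_close n z)) as [a' Ha']. by exists a'. }
  set F := fun n => nat_rect (fun _ => Dom X p -> A) (fun z => s (g 0%nat z))
    (fun m Fm z => nudge m (Fm z) (g (S m) z)) n.
  have Hlift : forall n, layered dX (F n) /\ forall z, pi (F n z) = g n z.
  { induction n as [|n [IHl IHp]]; split.
    - exact (layered_comp s (g_layered 0)).
    - intro z. apply Hs.
    - exact (layered_pair dX_refl (nudge n) IHl (g_layered (S n))).
    - intro z. exact (proj1 (Hnudge n _ z (IHp z))). }
  exists F. intro n. repeat split; try apply Hlift.
  intro z. exact (proj2 (Hnudge n _ z (proj2 (Hlift n) z))).
Qed.

End Lifting.

Arguments layered_lifts {X dX p} dX_refl {A Q d B pi} Hm Hinv Hpi {f g}.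

Theorem proposition6p4
  (X : nat -> Type) (dX : forall i : nat, X i -> X i -> R) (p : nat)
  (HX : forall i : nat, lt i p -> is_metric (dX i))
  (A Q : zmodType) (d : A -> A -> R) (B : A -> Prop) (pi : A -> Q)
  (HA : polish_ab_metric d) (HB : closed_subgroup d B)
  (Hpi : quotient_map B pi)
  (f : Dom X p -> Q) (Hf : almost_layered_q dX d pi f) :
  exists F : Dom X p -> A,
    almost_layered dX d F /\ forall z : Dom X p, pi (F z) = f z.
Proof.
  destruct HA as [Hm [Hinv [Hcomp _]]].
  have dX_refl : forall j (a : X j), lt j p -> dX j a a = 0.
  { intros j a hj. apply (HX j hj). reflexivity. }
  destruct (choice (fun n g => layered dX g /\ forall z, qdist_lt d pi (f z) (g z) ((/2) ^ n)))
    as [g Hg]; [intro n; exact: Hf (half_pos n)|].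
  destruct (layered_lifts dX_refl Hm Hinv Hpi (fun n => proj1 (Hg n)) (fun n => proj2 (Hg n)))
    as [Fs HFs].
  have Hlim : forall z, exists l, forall n, d (Fs n z) l <= 2 * 2 * (/2) ^ n.
  { intro z. apply (geometric_limit Hm (u := fun n => Fs n z)); auto.
    intro n. apply HFs. }
  destruct (choice _ Hlim) as [F HF].
  (* F is uniformly within 4 * 2^-N of the layered Fs N, whose classes are
     within 2^-N of f *)
  exists F. split.
  - intros eps He. destruct (@half_small (eps / 8)) as [N HN]; [lra|].
    exists (Fs N). split; [apply HFs|]. intro z.
    destruct Hm as [_ [_ [Dsym _]]]. rewrite Dsym. have := HF z N. lra.
  - intro z. apply (qd_limit Hm Hinv Hpi HB). intros e He.
    destruct (@half_small (e / 8)) as [N HN]; [lra|].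
    exists (Fs N z). split.
    + rewrite (proj1 (proj2 (HFs N)) z). apply (qd_mono (e := (/2) ^ N)); [lra|apply Hg].
    + have := HF z N. lra.
Qed.
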